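(* Let $\Sigma=(\mathbb{N}_0,X,U,\mathscr{U},\phi)$ be a control system as in the standing setup and let $Q\subset X$ be a nonempty compact set. Then $Q$ is finitely equi-invariant in the mean if and only if $Q$ has bounded invariance complexity in the mean.
   Context: Standing setup: $(X,d)$ is a metric space, $U$ is a compact metric space, and $F:X\times U\to X$ is a map such that $F_u:=F(\cdot,u)$ is continuous for every $u\in U$. Let $\mathscr U=U^{\mathbb N_0}$ with the product topology. For $\omega=(\omega_0,\omega_1,\dots)\in\mathscr U$, $x\in X$, set $\phi(0,x,\omega)=x$ and $\phi(k,x,\omega)=F_{\omega_{k-1}}\circ\cdots\circ F_{\omega_0}(x)$ for $k\ge1$. It is assumed that $\phi:\mathbb N_0\times X\times\mathscr U\to X$ is continuous. Notation: $\mathbb N=\{1,2,\dots\}$; $B(x,\delta)$ is the open ball; $d(y,Q)=\inf_{q\in Q}d(y,q)$. Finite equi-invariance in the mean: a point $x\in Q$ is a finitely equi-invariant point in the mean of $Q$ if for every $\varepsilon>0$ there exist $\delta>0$ and a finite set $F\subset\mathscr U$ such that for every $y\in B(x,\delta)\cap Q$ there is $\omega\in F$ with $\frac1n\sum_{i=0}^{n-1}d(\phi(i,y,\omega),Q)<\varepsilon$ for all $n\in\mathbb N$. $Q$ is finitely equi-invariant in the mean if every point of $Q$ is such a point. Invariance complexity in the mean: for $\omega\in\mathscr U$, $n\in\mathbb N$, $\varepsilon>0$ let $\hat Q^\varepsilon_{n,\omega}=\{x\in Q:\max_{1\le k\le n}\frac1k\sum_{i=0}^{k-1}d(\phi(i,x,\omega),Q)<\varepsilon\}$.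 A set $F\subset\mathscr U$ is $(n,\varepsilon,Q)$-spanning in the mean if $Q=\bigcup_{\omega\in F}\hat Q^\varepsilon_{n,\omega}$, and $\hat r_{inv}(n,\varepsilon,Q)$ is the minimal cardinality of such a set ($=\infty$ if none exists). $Q$ has bounded invariance complexity in the mean if for every $\varepsilon>0$ there is $C>0$ with $\hat r_{inv}(n,\varepsilon,Q)\le C$ for all $n\in\mathbb N$. *)

From HB Require Import structures.
From mathcomp Require Import all_boot all_order all_algebra.
From mathcomp Require Import all_classical all_reals all_analysis.
From mathcomp Require Import finmap.
Set Implicit Arguments. Unset Strict Implicit. Unset Printing Implicit Defensive.
Import Order.TTheory GRing.Theory Num.Theory.
Local Open Scope classical_set_scope.
Local Open Scope ring_scope.

Definition controls (U : Type) := {ptws nat -> U}.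

Definition is_metric_of {R : realType} {X : pseudoMetricType R}
    (d : X -> X -> R) : Prop :=
  [/\ (forall x y, 0 <= d x y),
      (forall x y, d x y = 0 <-> x = y),
      (forall x y, d x y = d y x),
      (forall x y z, d x z <= d x y + d y z) &
      (forall x (e : R), ball x e = [set y | d x y < e])].

Fixpoint phi {X U : Type} (F : X -> U -> X) (k : nat) (x : X) (w : controls U)
    : X :=
  match k with
  | 0 => x
  | k'.+1 => F (phi F k' x w) (w k')
  end.

Definition dist_set {R : realType} {X : Type} (d : X -> X -> R) (y : X)
    (Q : set X) : R :=
  inf [set d y q | q in Q].

Definition mean_dist {R : realType} {X : Type} {U : choiceType} (d : X -> X -> R)
    (F : X -> U -> X) (Q : set X) (n : nat) (y : X) (w : controls U) : R :=
  n%:R^-1 * \sum_(i < n) dist_set d (phi F i y w) Q.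

Definition fin_equi_inv_point_mean {R : realType} {X : Type} {U : choiceType}
    (d : X -> X -> R) (F : X -> U -> X) (Q : set X) (x : X) : Prop :=
  forall eps : R, 0 < eps ->
    exists delta : R, 0 < delta /\
    exists Fs : {fset controls U},
      forall y, Q y -> d x y < delta ->
        exists2 w, w \in Fs &
          forall n : nat, (1 <= n)%N -> mean_dist d F Q n y w < eps.

Definition fin_equi_inv_mean {R : realType} {X : Type} {U : choiceType}
    (d : X -> X -> R) (F : X -> U -> X) (Q : set X) : Prop :=
  forall x, Q x -> fin_equi_inv_point_mean d F Q x.

Definition Qhat {R : realType} {X : Type} {U : choiceType} (d : X -> X -> R)
    (F : X -> U -> X) (Q : set X) (n : nat) (eps : R) (w : controls U)
    : set X :=
  [set x | Q x /\
    forall k : nat, (1 <= k <= n)%N -> mean_dist d F Q k x w < eps].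

Definition spanning_mean {R : realType} {X : Type} {U : choiceType} (d : X -> X -> R)
    (F : X -> U -> X) (Q : set X) (n : nat) (eps : R) (S : set (controls U))
    : Prop :=
  Q = \bigcup_(w in S) Qhat d F Q n eps w.

(** \hat r_inv(n, eps, Q): the minimal cardinality of a spanning set, +oo if
    there is none (an infinite spanning set has infinite cardinality, so only
    finite ones matter for the minimum; inf of the empty set is +oo). *)
Definition r_inv_mean {R : realType} {X : Type} {U : choiceType} (d : X -> X -> R)
    (F : X -> U -> X) (Q : set X) (n : nat) (eps : R) : \bar R :=
  ereal_inf [set (((#|` S |)%fset)%:R)%:E | S in
               [set S : {fset controls U} |
                  spanning_mean d F Q n eps [set` S]%fset]].

Definition bounded_inv_complexity_mean {R : realType} {X : Type} {U : choiceType}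
    (d : X -> X -> R) (F : X -> U -> X) (Q : set X) : Prop :=
  forall eps : R, 0 < eps ->
    exists C : R, 0 < C /\
      forall n : nat, (1 <= n)%N -> (r_inv_mean d F Q n eps <= C%:E)%E.

From HB Require Import structures.
From mathcomp Require Import all_boot all_order all_algebra.
From mathcomp Require Import all_classical all_reals all_analysis.
From mathcomp Require Import finmap.
From mathcomp Require Import lra.
Import Order.TTheory GRing.Theory Num.Theory numFieldNormedType.Exports.
Local Open Scope classical_set_scope.
Local Open Scope ring_scope.
Set Implicit Arguments. Unset Strict Implicit. Unset Printing Implicit Defensive.

(* Both conditions are shown equivalent to an intermediate one: for every
   eps > 0 there is a finite set Fs of controls such that every y in Q has a
   control w in Fs with (1/n) sum_{i<n} d(phi(i,y,w), Q) < eps for ALL n >= 1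
   ("Fs is eps-uniform", [uniform_controls]).
   - A uniform Fs is (n, eps, Q)-spanning for every n, so it bounds the
     invariance complexity, and it trivially witnesses finite
     equi-invariance at every point.
   - Finite equi-invariance gives a uniform Fs by compactness of Q: cover Q
     by the finitely many balls attached to its points and take the union of
     the attached finite sets of controls.
   - Bounded complexity (size <= M) gives a uniform Fs by a diagonal
     compactness argument: the n-th spanning set is stored as the first M
     columns of a "table" in the compact space U^(N x N); a cluster point of
     these tables has M columns, one of which, for every y in Q, works for
     every horizon n (pigeonhole over the M columns). *)

(* Compactness in terms of open covers, for any nonempty set (the library
   states it only for pointed spaces). *)
Lemma compact_cover_compact (T : topologicalType) (A : set T) :
  compact A -> A !=set0 -> cover_compact A.
Proof.
move=> cA [a _].
pose Ta : ptopologicalType := HB.pack T (isPointed.Build T a).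
have cTa : @compact Ta A := cA.
by rewrite compact_cover in cTa.
Qed.

(* In a compact space, if a sequence eventually enters each closed set of a
   countable family, then the family has a common point (any cluster point
   of the sequence). *)
Lemma compact_cluster_of_eventually (T : topologicalType) (x : nat -> T)
    (L : nat -> set T) :
  compact [set: T] -> (forall n, closed (L n)) ->
  (forall n, \forall m \near \oo, L n (x m)) ->
  exists G, forall n, L n G.
Proof.
move=> cT clL evL.
have [G [_ clusterG]] := cT (x @ \oo) (fmap_proper_filter _ _) filterT.
exists G => n; apply: clL.
by move: clusterG; rewrite clusterE; apply; exact: evL.
Qed.

Lemma uniform_index_pigeonhole (I : finType) (P : I -> nat -> Prop) :
  (forall n, exists i, forall k, (k <= n)%N -> P i k) ->
  exists i, forall k, P i k.
Proof.
move=> Pn; apply: contrapT => noi.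
have /choice[K notPK] : forall i, exists k, ~ P i k.
  move=> i; apply: contrapT => allP; apply: noi; exists i => k.
  by apply: contrapT => notP; apply: allP; exists k.
have [i Pi] := Pn (\max_i K i).
exact: notPK i (Pi _ (leq_bigmax i)).
Qed.

Section MetricDistance.
Variables (R : realType) (X : pseudoMetricType R) (d : X -> X -> R).
Hypothesis d_metric : is_metric_of d.

Lemma open_dball x r : open [set y | d x y < r].
Proof.
case: d_metric => _ _ _ dtri dball; rewrite openE => z /= xz.
have r_gt0 : 0 < r - d x z by rewrite subr_gt0.
apply: filterS (nbhsx_ballx z _ r_gt0) => y; rewrite dball /= => zy.
by apply: le_lt_trans (dtri x z y) _; rewrite -ltrBrDl.
Qed.

Lemma dist_set_le (Q : set X) y z :
  Q !=set0 -> dist_set d y Q <= d y z + dist_set d z Q.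
Proof.
case: d_metric => d_ge0 _ _ dtri _ [q0 Qq0].
rewrite -lerBlDl; apply: lb_le_inf; first by exists (d z q0), q0.
move=> _ [q Qq <-]; rewrite lerBlDl.
apply: le_trans (dtri y z q); apply: ge_inf; last by exists q.
by exists 0 => _ [p _ <-].
Qed.

Lemma dist_set_continuous (Q : set X) :
  Q !=set0 -> continuous (fun y : X => dist_set d y Q).
Proof.
move=> Q0 y; apply/cvgrPdist_lt => e e_gt0.
case: d_metric => _ _ dsym _ dball.
apply: filterS (nbhsx_ballx y _ e_gt0) => z; rewrite dball /= => yz.
have := dist_set_le y z Q0; have := dist_set_le z y Q0.
by rewrite dsym ltr_norml => *; apply/andP; split; lra.
Qed.

End MetricDistance.

Section MeanContinuity.
Variables (R : realType) (X : pseudoMetricType R) (d : X -> X -> R).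
Variables (U : topologicalType) (F : X -> U -> X) (Q : set X).
Hypothesis dist_continuous : continuous (fun y : X => dist_set d y Q).
Hypothesis phi_continuous :
  forall k, continuous (fun p : X * controls U => phi F k p.1 p.2).

Lemma phi_continuous_control i y :
  continuous (fun w : controls U => phi F i y w).
Proof.
move=> w; apply: (@continuous_comp _ _ _ (fun w : controls U => (y, w))
  (fun p : X * controls U => phi F i p.1 p.2) w); last exact: phi_continuous.
exact: cvg_pair (cvg_cst y) (@cvg_id _ (nbhs w)).
Qed.

Lemma mean_dist_continuous k y :
  continuous (fun w : controls U => mean_dist d F Q k y w).
Proof.
have sum_continuous : continuous (fun w : controls U =>
    \sum_(i < k) dist_set d (phi F i y w) Q).
  apply: (@continuous_big R 'I_k +%R 0 xpredT add_continuous) => i _ w.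
  apply: (@continuous_comp _ _ _ (fun w => phi F i y w) (dist_set d^~ Q) w).
    exact: phi_continuous_control.
  exact: dist_continuous.
move=> w; rewrite /mean_dist; apply: cvgMl_tmp; last exact: sum_continuous.
exact: nbhs_filter.
Qed.

End MeanContinuity.

Section UniformControls.
Variables (R : realType) (X : Type) (U : choiceType).
Variables (d : X -> X -> R) (F : X -> U -> X) (Q : set X).

Definition uniform_controls (eps : R) (Fs : {fset controls U}) : Prop :=
  forall y, Q y -> exists2 w, w \in Fs &
    forall n, (1 <= n)%N -> mean_dist d F Q n y w < eps.

Lemma uniform_controls_spanning eps Fs n :
  uniform_controls eps Fs -> spanning_mean d F Q n eps [set` Fs].
Proof.
move=> unifFs; apply/seteqP; split=> [y Qy|y [w _ []] //].
have [w Fsw mean_lt] := unifFs y Qy.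
by exists w => //; split=> // k /andP[k_gt0 _]; exact: mean_lt.
Qed.

Lemma r_inv_mean_le_card n eps (S : {fset controls U}) :
  spanning_mean d F Q n eps [set` S] ->
  (r_inv_mean d F Q n eps <= ((#|` S|%fset)%:R)%:E)%E.
Proof. by move=> spanS; apply: ereal_inf_lbound; exists S. Qed.

Lemma r_inv_mean_lt n eps (c : R) :
  (r_inv_mean d F Q n eps < c%:E)%E ->
  exists2 S : {fset controls U}, spanning_mean d F Q n eps [set` S] &
    (#|` S|%fset)%:R < c.
Proof. by move=> /ereal_inf_lt[_ [S spanS <-]]; rewrite lte_fin; exists S. Qed.

Lemma uniform_bounded_complexity :
  (forall eps, 0 < eps -> exists Fs, uniform_controls eps Fs) ->
  bounded_inv_complexity_mean d F Q.
Proof.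
move=> unif eps eps_gt0; have [Fs unifFs] := unif eps eps_gt0.
exists ((#|` Fs|%fset)%:R + 1); split=> [|n _]; first by rewrite ltr_wpDl.
apply: le_trans (r_inv_mean_le_card (uniform_controls_spanning n unifFs)) _.
by rewrite lee_fin lerDl.
Qed.

Lemma uniform_fin_equi_inv :
  (forall eps, 0 < eps -> exists Fs, uniform_controls eps Fs) ->
  fin_equi_inv_mean d F Q.
Proof.
move=> unif x _ eps eps_gt0; have [Fs unifFs] := unif eps eps_gt0.
by exists 1; split=> //; exists Fs => y Qy _; exact: unifFs.
Qed.

End UniformControls.

(* Finite equi-invariance in the mean yields uniform finite sets of controls:
   finitely many of the balls attached to the points of Q cover Q. *)
Lemma fin_equi_inv_uniform (R : realType) (X : pseudoMetricType R)
    (U : choiceType) (d : X -> X -> R) (F : X -> U -> X) (Q : set X) :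
  is_metric_of d -> compact Q -> Q !=set0 -> fin_equi_inv_mean d F Q ->
  forall eps, 0 < eps -> exists Fs, uniform_controls d F Q eps Fs.
Proof.
move=> d_metric cQ Q0 equi eps eps_gt0.
have /choice[G localG] : forall x, exists p : R * {fset controls U}, Q x ->
    0 < p.1 /\ forall y, Q y -> d x y < p.1 -> exists2 w, w \in p.2 &
      forall n, (1 <= n)%N -> mean_dist d F Q n y w < eps.
  move=> x; have [Qx|nQx] := pselect (Q x); last by exists (1, fset0) => /nQx.
  by have [r [r_gt0 [Fs ?]]] := equi x Qx eps eps_gt0; exists (r, Fs).
have coverQ : Q `<=` cover Q (fun x => [set y | d x y < (G x).1]).
  move=> y Qy; exists y => //=; case: d_metric => _ d_eq0 _ _ _.
  by rewrite (d_eq0 y y).2 //; case: (localG y Qy).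
have [D DQ coverD] := compact_cover_compact cQ Q0
  (fun x _ => open_dball d_metric x _) coverQ.
exists (\bigcup_(x <- D) (G x).2)%fset => y Qy.
have [x /= Dx xy] := coverD y Qy.
have Qx : Q x by have := DQ x Dx; rewrite in_setE.
have [w Gw mean_lt] := (localG x Qx).2 y Qy xy.
by exists w => //; apply/bigfcupP; exists x => //; rewrite Dx.
Qed.

(* Sequences of controls are stored as the columns of a table in
   U^(N x N), which is compact when U is.  U is taken uniform because the
   library characterizes pointwise convergence for uniform codomains. *)
Section ControlTables.
Variables (U : uniformType) (w0 : controls U).

Definition column (j : nat) (W : {ptws nat * nat -> U}) : controls U :=
  fun i => W (i, j).

Definition table (s : seq (controls U)) : {ptws nat * nat -> U} :=
  fun p => nth w0 s p.2 p.1.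

Lemma column_table s j : column j (table s) = nth w0 s j.
Proof. by []. Qed.

Lemma column_continuous j : continuous (column j).
Proof.
move=> W; have cW : Filter (column j @ W) by apply: fmap_filter; exact: nbhs_filter.
refine ((@pointwise_cvgP nat U _ _ cW).2 _) => i.
exact: (@proj_continuous _ (fun=> U) (i, j) W).
Qed.

Lemma compact_tables :
  compact [set: U] -> compact [set: {ptws nat * nat -> U}].
Proof.
move=> cU; have := @tychonoff (nat * nat)%type (fun=> U) (fun=> setT) (fun=> cU).
by congr compact; apply/seteqP; split.
Qed.

End ControlTables.

Section BoundedComplexity.
Variables (R : realType) (X : pseudoMetricType R) (d : X -> X -> R).
Variables (U : uniformType) (F : X -> U -> X) (Q : set X).
Hypothesis d_metric : is_metric_of d.
Hypothesis Q0 : Q !=set0.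
Hypothesis phi_continuous :
  forall k, continuous (fun p : X * controls U => phi F k p.1 p.2).

Lemma bounded_spanning_sets eps :
  bounded_inv_complexity_mean d F Q -> 0 < eps ->
  exists M (S : nat -> {fset controls U}), forall n, (1 <= n)%N ->
    spanning_mean d F Q n eps [set` S n] /\ (#|` S n|%fset <= M)%N.
Proof.
move=> bounded eps_gt0; have [C [C_gt0 rC]] := bounded eps eps_gt0.
pose M := Num.Def.archi_bound (C + 1).
have C_lt_M : C + 1 < M%:R by apply: archi_boundP; lra.
suff /choice[S spanS] : forall n, exists S : {fset controls U}, (1 <= n)%N ->
    spanning_mean d F Q n eps [set` S] /\ (#|` S|%fset <= M)%N.
  by exists M, S.
move=> n; have [n_gt0|] := leqP 1 n; last by exists fset0.
have [|S spanS cardS] := @r_inv_mean_lt _ _ _ d F Q n eps (C + 1).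
  by apply: le_lt_trans (rC n n_gt0) _; rewrite lte_fin ltrDl.
exists S => _; split=> //; apply: ltnW; rewrite -(ltr_nat R).
exact: lt_trans cardS C_lt_M.
Qed.

Definition good_tables (M n : nat) (eps : R) : set {ptws nat * nat -> U} :=
  \bigcap_(y in Q) \bigcup_(j in [set: 'I_M])
    \bigcap_(k in [set k | (1 <= k <= n)%N])
      [set W | mean_dist d F Q k y (column j W) <= eps].

Lemma good_tables_closed M n eps : closed (good_tables M n eps).
Proof.
apply: closed_bigI => y _; apply: closed_bigcup; first exact: finite_finset.
move=> j _; apply: closed_bigI => k _.
apply: (preimage_closed _ (@closed_le _ eps)) => W _.
apply: (@continuous_comp _ _ _ (column j)
  (fun w => mean_dist d F Q k y w)); first exact: column_continuous.
exact: mean_dist_continuous (dist_set_continuous d_metric Q0) phi_continuous _ _ _.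
Qed.

Lemma spanning_good_table w0 M n m eps (S : {fset controls U}) :
  (n <= m)%N -> (#|` S|%fset <= M)%N -> spanning_mean d F Q m eps [set` S] ->
  good_tables M n eps (table w0 S).
Proof.
move=> nm cardS spanS y Qy.
have : (\bigcup_(w in [set` S]) Qhat d F Q m eps w) y by rewrite -spanS.
case=> w Sw [_ mean_lt].
have jM : (index w S < M)%N.
  by apply: leq_trans cardS; rewrite card_fset_sum1 sum1_size index_mem.
exists (Ordinal jM) => // k /= /andP[k_gt0 kn].
rewrite column_table nth_index //; apply/ltW/mean_lt.
by rewrite k_gt0 (leq_trans kn nm).
Qed.

Lemma bounded_complexity_uniform :
  compact [set: U] -> bounded_inv_complexity_mean d F Q ->
  forall eps, 0 < eps -> exists Fs, uniform_controls d F Q eps Fs.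
Proof.
move=> cU bounded eps eps_gt0.
have [|M [S spanS]] := bounded_spanning_sets bounded (_ : 0 < eps / 2).
  by lra.
have [w0 _] : exists w0 : controls U, True.
  have [y Qy] := Q0; have [spanS1 _] := spanS 1%N (leqnn 1).
  by move: Qy; rewrite spanS1 => -[w _ _]; exists w.
have [G goodG] : exists G, forall n, good_tables M n.+1 (eps / 2) G.
  apply: (compact_cluster_of_eventually (x := fun m => table w0 (S m))
    (compact_tables cU)) => n; first exact: good_tables_closed.
  apply: filterS (nbhs_infty_ge n.+1) => m nm.
  have [spanSm cardSm] := spanS m (leq_trans (ltn0Sn n) nm).
  exact: spanning_good_table cardSm spanSm.
exists [fset column (nat_of_ord j) G | j in 'I_M]%fset => y Qy.
have [j mean_le] : exists j : 'I_M, forall k, (1 <= k)%N ->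
    mean_dist d F Q k y (column j G) <= eps / 2.
  apply: uniform_index_pigeonhole => n; have [j _ mean_le] := goodG n y Qy.
  by exists j => k kn k_gt0; apply: mean_le; rewrite /= k_gt0 (leq_trans kn).
exists (column j G); first by apply/imfsetP; exists j.
by move=> n n_gt0; apply: le_lt_trans (mean_le n n_gt0) _; lra.
Qed.

End BoundedComplexity.

Theorem mainTheorem2 (R : realType) (X : pseudoMetricType R)
    (d : X -> X -> R) (U : pseudoMetricType R) (F : X -> U -> X)
    (Q : set X) :
  is_metric_of d ->
  hausdorff_space U -> compact [set: U] ->
  (forall u : U, continuous (fun x : X => F x u)) ->
  (forall k : nat,
     continuous (fun p : X * controls U => phi F k p.1 p.2)) ->
  Q !=set0 -> compact Q ->
  fin_equi_inv_mean d F Q <-> bounded_inv_complexity_mean d F Q.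
Proof.
move=> d_metric _ cU _ phi_continuous Q0 cQ; split=> [equi|bounded].
  apply: uniform_bounded_complexity.
  exact: fin_equi_inv_uniform d_metric cQ Q0 equi.
apply: uniform_fin_equi_inv.
exact: bounded_complexity_uniform d_metric Q0 phi_continuous cU bounded.
Qed.
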